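(* Let $A_1,A_2,B_1,B_2,C_1\in\mathbb{C}^{r\times r}$ with $C_1+mI$ invertible for all $m\ge0$, $A_iB_1=B_1A_i$ ($i=1,2$) and $C_1B_2=B_2C_1$. Let $n\ge1$ and suppose $A_2+mI$ is invertible for all $m\ge0$. Then $$F_{13}[A_2+nI]=F_{13}+x_2\Big[\sum_{n_1=1}^nF_{13}[A_2+n_1I,B_2+I,C_1+I]\Big]B_2C_1^{-1}+x_3B_1\Big[\sum_{n_1=1}^nF_{13}[A_2+n_1I,B_1+I,C_1+I]\Big]C_1^{-1}.$$ Furthermore, if $A_2-n_1I$ is invertible for $0\le n_1\le n$, then $$F_{13}[A_2-nI]=F_{13}-x_2\Big[\sum_{n_1=0}^{n-1}F_{13}[A_2-n_1I,B_2+I,C_1+I]\Big]B_2C_1^{-1}-x_3B_1\Big[\sum_{n_1=0}^{n-1}F_{13}[A_2-n_1I,B_1+I,C_1+I]\Big]C_1^{-1}.$$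
   Context: For $M\in\mathbb{C}^{r\times r}$: $(M)_0=I$, $(M)_m=M(M+I)\cdots(M+(m-1)I)$, $(M)^{-1}_m=((M)_m)^{-1}$. The three-variable Lauricella matrix function $$F_{13}=F_{13}[A_1,A_2,B_1,B_2;C_1;x_1,x_2,x_3]=\sum_{m_1,m_2,m_3\ge0}(A_1)_{m_1}(A_2)_{m_2+m_3}(B_1)_{m_1+m_3}(B_2)_{m_2}(C_1)^{-1}_{m_1+m_2+m_3}\frac{x_1^{m_1}x_2^{m_2}x_3^{m_3}}{m_1!m_2!m_3!},$$ with scalar variables $x_i$ and matrix products in the written order; identities are of formal power series in the $x_i$. $F_{13}[\dots]$ lists only the shifted parameters, all others unchanged. *)

From HB Require Import structures.
From mathcomp Require Import all_boot all_order all_algebra.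
From mathcomp Require Import complex reals.
Set Implicit Arguments. Unset Strict Implicit. Unset Printing Implicit Defensive.
Import Order.TTheory GRing.Theory Num.Theory.
Local Open Scope ring_scope.

Section Defs.
Variables (K : comUnitRingType) (r : nat).

Definition mpoch (M : 'M[K]_r) (m : nat) : 'M[K]_r :=
  \big[@mulmx K r r r / 1%:M]_(i < m) (M + (i%:R)%:M).

Definition mpochinv (M : 'M[K]_r) (m : nat) : 'M[K]_r := invmx (mpoch M m).

(* Formal power series in x1, x2, x3 with r x r matrix coefficients,
   represented by their coefficient function (m1, m2, m3) |-> coefficient
   of x1^m1 x2^m2 x3^m3. *)
Definition fps3 := nat -> nat -> nat -> 'M[K]_r.

Definition F13 (A1 A2 B1 B2 C1 : 'M[K]_r) : fps3 := fun m1 m2 m3 =>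
  ((m1`! * m2`! * m3`!)%:R)^-1 *:
    (mpoch A1 m1 *m mpoch A2 (m2 + m3) *m mpoch B1 (m1 + m3)
       *m mpoch B2 m2 *m mpochinv C1 (m1 + m2 + m3)).

Definition fadd (F G : fps3) : fps3 := fun m1 m2 m3 => F m1 m2 m3 + G m1 m2 m3.
Definition fopp (F : fps3) : fps3 := fun m1 m2 m3 => - F m1 m2 m3.
(* multiplication by the variable x2, resp. x3 *)
Definition fx2 (F : fps3) : fps3 := fun m1 m2 m3 =>
  if m2 is m2'.+1 then F m1 m2' m3 else 0.
Definition fx3 (F : fps3) : fps3 := fun m1 m2 m3 =>
  if m3 is m3'.+1 then F m1 m2 m3' else 0.
Definition fmulr (F : fps3) (M : 'M[K]_r) : fps3 := fun m1 m2 m3 => F m1 m2 m3 *m M.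
Definition fmull (M : 'M[K]_r) (F : fps3) : fps3 := fun m1 m2 m3 => M *m F m1 m2 m3.
Definition fsum (a b : nat) (F : nat -> fps3) : fps3 := fun m1 m2 m3 =>
  \sum_(a <= k < b) F k m1 m2 m3.
Definition feq (F G : fps3) : Prop := forall m1 m2 m3, F m1 m2 m3 = G m1 m2 m3.

End Defs.

(* The proof rests on one contiguous relation, valid for every D commuting
   with B1:
     F13[A2 := D+I] = F13[A2 := D] + x2 F13[D+I, B2+I, C1+I] B2 C1^{-1}
                                   + x3 B1 F13[D+I, B1+I, C1+I] C1^{-1}.
   Coefficientwise it follows from the difference rule for Pochhammer symbols
   (D+I)_k - (D)_k = k (D+I)_(k-1): at x1^a x2^b x3^c all three
   differences are multiples of one matrix, with weights (b+c), b and c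
   divided by a! b! c!.  Iterating the relation along D = A2 + kI (resp.
   A2 - kI) and telescoping gives the two identities of the theorem. *)

From HB Require Import structures.
From mathcomp Require Import all_boot all_order all_algebra.
From mathcomp Require Import complex reals.
From mathcomp Require Import ring.
Set Implicit Arguments. Unset Strict Implicit. Unset Printing Implicit Defensive.
Import Order.TTheory GRing.Theory Num.Theory.
Local Open Scope ring_scope.

Section Pochhammer.
Variables (K : comUnitRingType) (r : nat).
Implicit Types (M N C D : 'M[K]_r).

Lemma mpoch0 M : mpoch M 0 = 1%:M.
Proof. by rewrite /mpoch big_ord0. Qed.

Lemma mpochSl M k : mpoch M k.+1 = M *m mpoch (M + 1%:M) k.
Proof.
rewrite /mpoch big_ord_recl /= raddf0 addr0; congr (_ *m _).
by apply: eq_bigr => i _; rewrite /bump /= add1n -nat1r raddfD /= addrA.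
Qed.

Lemma mpochSr M k : mpoch M k.+1 = mpoch M k *m (M + (k%:R)%:M).
Proof.
elim: k M => [|k IH] M; first by rewrite mpochSl !mpoch0 mulmx1 mul1mx raddf0 addr0.
by rewrite mpochSl IH mulmxA -mpochSl -addrA -raddfD /= nat1r.
Qed.

Lemma comm_shift M N (a : K) :
  M *m N = N *m M -> M *m (N + a%:M) = (N + a%:M) *m M.
Proof. by move=> MN; rewrite mulmxDl mulmxDr MN scalar_mxC. Qed.

Lemma comm_mpoch M N k : M *m N = N *m M -> M *m mpoch N k = mpoch N k *m M.
Proof.
move=> MN; elim: k => [|k IH]; first by rewrite mpoch0 mul1mx mulmx1.
by rewrite mpochSr mulmxA IH -!mulmxA (comm_shift _ MN).
Qed.

(* A matrix commuting with N commutes with its inverse (trivially so if N is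
   singular, since invmx is then the identity map). *)
Lemma comm_invmx M N : M *m N = N *m M -> M *m invmx N = invmx N *m M.
Proof.
move=> MN; have [N_unit|] := boolP (N \in unitmx); last by move=> /invmx_out->.
apply: (canRL (mulKmx N_unit)); rewrite mulmxA -MN -mulmxA.
by rewrite mulmxV // mulmx1.
Qed.

Lemma mpochSl_r M k : mpoch M k.+1 = mpoch (M + 1%:M) k *m M.
Proof. by rewrite mpochSl comm_mpoch // comm_shift. Qed.

Lemma mpoch_diff D k :
  mpoch (D + 1%:M) k - mpoch D k = k%:R *: mpoch (D + 1%:M) k.-1.
Proof.
case: k => [|k]; first by rewrite !mpoch0 subrr scale0r.
rewrite mpochSr mpochSl_r -mulmxBr /=.
have -> : D + 1%:M + (k%:R)%:M - D = (k.+1%:R)%:M.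
  by rewrite addrAC [D + 1%:M]addrC addrK -raddfD /= nat1r.
by rewrite mul_mx_scalar.
Qed.

Lemma invmxM M N : M \in unitmx -> N \in unitmx ->
  invmx (M *m N) = invmx N *m invmx M.
Proof.
move=> M_unit N_unit; have MN_unit : M *m N \in unitmx by rewrite unitmx_mul M_unit.
have inv_prod : M *m N *m (invmx N *m invmx M) = 1%:M.
  by rewrite -mulmxA (mulmxA N) mulmxV // mul1mx mulmxV.
by rewrite -[LHS]mulmx1 -inv_prod mulmxA mulVmx // mul1mx.
Qed.

Lemma mpoch_unit C k :
  (forall m : nat, C + (m%:R)%:M \in unitmx) -> mpoch C k \in unitmx.
Proof.
move=> C_unit; elim: k => [|k IH]; first by rewrite mpoch0 unitmx1.
by rewrite mpochSr unitmx_mul IH C_unit.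
Qed.

Lemma mpochinvS C k : (forall m : nat, C + (m%:R)%:M \in unitmx) ->
  mpochinv C k.+1 = mpochinv (C + 1%:M) k *m invmx C.
Proof.
move=> C_unit; rewrite /mpochinv mpochSl invmxM //.
  by have := C_unit 0%N; rewrite raddf0 addr0.
by apply: mpoch_unit => m; rewrite -addrA -raddfD /= nat1r.
Qed.

End Pochhammer.

Section Weights.
Variable K : numFieldType.

Definition invfact3 (a b c : nat) : K := ((a`! * b`! * c`!)%:R)^-1.

Lemma invfact3_S2 a b c : invfact3 a b c = b.+1%:R * invfact3 a b.+1 c.
Proof.
rewrite /invfact3 factS !natrM.
have fact_neq0 k : (k`!)%:R != 0 :> K by rewrite pnatr_eq0 -lt0n fact_gt0.
by field; rewrite !fact_neq0 nat1r pnatr_eq0.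
Qed.

Lemma invfact3_S3 a b c : invfact3 a b c = c.+1%:R * invfact3 a b c.+1.
Proof.
have swap x y z : invfact3 x y z = invfact3 x z y by rewrite /invfact3 mulnAC.
by rewrite swap [invfact3 a b _]swap; apply: invfact3_S2.
Qed.

End Weights.

Section Contiguous.
Variables (K : numFieldType) (r : nat) (A1 B1 B2 C1 : 'M[K]_r).
Hypotheses (C1_unit : forall m : nat, C1 + (m%:R)%:M \in unitmx)
  (A1B1 : A1 *m B1 = B1 *m A1) (C1B2 : C1 *m B2 = B2 *m C1).

Definition x2_part (F : fps3 K r) : fps3 K r := fx2 (fmulr (fmulr F B2) (invmx C1)).
Definition x3_part (F : fps3 K r) : fps3 K r := fx3 (fmull B1 (fmulr F (invmx C1))).

(* The increment F13[D] - F13[D - I] predicted by the contiguous relation. *)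
Definition F13_incr (D : 'M[K]_r) : fps3 K r :=
  fadd (x2_part (F13 A1 D B1 (B2 + 1%:M) (C1 + 1%:M)))
       (x3_part (F13 A1 D (B1 + 1%:M) B2 (C1 + 1%:M))).

(* The common matrix part of the three coefficients compared in the
   contiguous relation between F13[D+I] and F13[D]. *)
Definition F13_core (D : 'M[K]_r) (a b c : nat) : 'M[K]_r :=
  mpoch A1 a *m mpoch (D + 1%:M) (b + c).-1 *m mpoch B1 (a + c)
    *m mpoch B2 b *m mpochinv C1 (a + b + c).

Lemma F13_diff_coef D a b c :
  F13 A1 (D + 1%:M) B1 B2 C1 a b c - F13 A1 D B1 B2 C1 a b c
  = ((b + c)%:R * invfact3 K a b c) *: F13_core D a b c.
Proof.
rewrite /F13 -scalerBr -!mulmxBl -mulmxBr mpoch_diff.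
by rewrite -scalemxAr !scalemxAl scalerA mulrC.
Qed.

(* Using C1 B2 = B2 C1: (B2+I)_b (C1+I)^{-1}_k B2 C1^{-1} = (B2)_(b+1) (C1)^{-1}_(k+1). *)
Lemma mpoch_B2C1_shift b k :
  mpoch (B2 + 1%:M) b *m mpochinv (C1 + 1%:M) k *m B2 *m invmx C1
  = mpoch B2 b.+1 *m mpochinv C1 k.+1.
Proof.
have B2_comm : B2 *m mpochinv (C1 + 1%:M) k = mpochinv (C1 + 1%:M) k *m B2.
  by apply/comm_invmx/comm_mpoch/comm_shift.
by rewrite mpochinvS // mpochSl_r -(mulmxA _ _ B2) -B2_comm !mulmxA.
Qed.

Lemma x2_part_coef D a b c :
  x2_part (F13 A1 (D + 1%:M) B1 (B2 + 1%:M) (C1 + 1%:M)) a b c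
  = (b%:R * invfact3 K a b c) *: F13_core D a b c.
Proof.
case: b => [|b] /=; first by rewrite mul0r scale0r.
rewrite /fmulr /F13 -invfact3_S2 -!scalemxAl; congr (_ *: _).
rewrite /F13_core addSn addnS addSn /=.
by rewrite -[in RHS]mulmxA -mpoch_B2C1_shift !mulmxA.
Qed.

(* Coefficient of the x3-correction: a c-multiple of F13_core.  Here B1
   must be moved across (A1)_a and (D+I)_j, hence D B1 = B1 D. *)
Lemma x3_part_coef D a b c : D *m B1 = B1 *m D ->
  x3_part (F13 A1 (D + 1%:M) (B1 + 1%:M) B2 (C1 + 1%:M)) a b c
  = (c%:R * invfact3 K a b c) *: F13_core D a b c.
Proof.
move=> DB1; case: c => [|c] /=; first by rewrite mul0r scale0r.
rewrite /fmull /fmulr /F13 -invfact3_S3 -scalemxAl -scalemxAr; congr (_ *: _).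
rewrite /F13_core !addnS /= mpochinvS // mpochSl !mulmxA.
rewrite (comm_mpoch _ (esym A1B1)) -(mulmxA _ B1).
rewrite (comm_mpoch _ (comm_shift _ (esym DB1))).
by rewrite !mulmxA.
Qed.

Lemma F13_contiguous D : D *m B1 = B1 *m D ->
  feq (F13 A1 (D + 1%:M) B1 B2 C1)
      (fadd (F13 A1 D B1 B2 C1) (F13_incr (D + 1%:M))).
Proof.
move=> DB1 a b c; rewrite /fadd /F13_incr /fadd.
rewrite -[LHS](subrK (F13 A1 D B1 B2 C1 a b c)) F13_diff_coef addrC.
by rewrite x2_part_coef x3_part_coef // -scalerDl -mulrDl -natrD.
Qed.

End Contiguous.

Section Telescoping.
Variables (K : comUnitRingType) (r : nat).
Implicit Types (G H : nat -> fps3 K r).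

Lemma telescope_up G H n :
  (forall k, feq (G k.+1) (fadd (G k) (H k.+1))) ->
  feq (G n) (fadd (G 0%N) (fsum 1 n.+1 H)).
Proof.
move=> step; elim: n => [|n IH] m1 m2 m3.
  by rewrite /fadd /fsum big_geq // addr0.
by rewrite step /fadd IH /fsum big_nat_recr //= addrA.
Qed.

Lemma telescope_down G H n :
  (forall k, feq (G k) (fadd (G k.+1) (H k))) ->
  feq (G n) (fadd (G 0%N) (fopp (fsum 0 n H))).
Proof.
move=> step; elim: n => [|n IH] m1 m2 m3.
  by rewrite /fadd /fopp /fsum big_geq // oppr0 addr0.
have -> : G n.+1 m1 m2 m3 = G n m1 m2 m3 - H n m1 m2 m3.
  by rewrite (step n) /fadd addrK.
by rewrite IH /fadd /fopp /fsum big_nat_recr //= opprD addrA.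
Qed.

End Telescoping.

Section Shifts.
Variables (K : numFieldType) (r : nat) (A1 A2 B1 B2 C1 : 'M[K]_r).
Hypotheses (C1_unit : forall m : nat, C1 + (m%:R)%:M \in unitmx)
  (A1B1 : A1 *m B1 = B1 *m A1) (A2B1 : A2 *m B1 = B1 *m A2)
  (C1B2 : C1 *m B2 = B2 *m C1).

Lemma F13_incr_fsum (Ds : nat -> 'M[K]_r) a b :
  feq (fsum a b (fun k => F13_incr A1 B1 B2 C1 (Ds k)))
      (fadd (x2_part B2 C1 (fsum a b (fun k => F13 A1 (Ds k) B1 (B2 + 1%:M) (C1 + 1%:M))))
            (x3_part B1 C1 (fsum a b (fun k => F13 A1 (Ds k) (B1 + 1%:M) B2 (C1 + 1%:M))))).
Proof.
move=> m1 m2 m3; rewrite /fsum /F13_incr /fadd big_split /=; congr (_ + _).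
- case: m2 => [|m2] /=; first by rewrite big1.
  by rewrite /fmulr !mulmx_suml.
- case: m3 => [|m3] /=; first by rewrite big1.
  by rewrite /fmull /fmulr mulmx_suml mulmx_sumr.
Qed.

Lemma F13_shift_up n :
  feq (F13 A1 (A2 + (n%:R)%:M) B1 B2 C1)
      (fadd (fadd (F13 A1 A2 B1 B2 C1)
        (x2_part B2 C1 (fsum 1 n.+1 (fun n1 =>
                F13 A1 (A2 + (n1%:R)%:M) B1 (B2 + 1%:M) (C1 + 1%:M)))))
        (x3_part B1 C1 (fsum 1 n.+1 (fun n1 =>
                F13 A1 (A2 + (n1%:R)%:M) (B1 + 1%:M) B2 (C1 + 1%:M))))).
Proof.
pose G k := F13 A1 (A2 + (k%:R)%:M) B1 B2 C1.
have step k : feq (G k.+1) (fadd (G k) (F13_incr A1 B1 B2 C1 (A2 + (k.+1%:R)%:M))).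
  rewrite /G -natr1 raddfD addrA; apply: F13_contiguous => //.
  by rewrite (comm_shift _ (esym A2B1)).
move=> m1 m2 m3.
have := telescope_up (H := fun k => F13_incr A1 B1 B2 C1 (A2 + (k%:R)%:M)) n step m1 m2 m3.
rewrite /G /= => ->.
by rewrite raddf0 addr0 /fadd F13_incr_fsum /fadd addrA.
Qed.

Lemma F13_shift_down n :
  feq (F13 A1 (A2 - (n%:R)%:M) B1 B2 C1)
      (fadd (fadd (F13 A1 A2 B1 B2 C1)
        (fopp (x2_part B2 C1 (fsum 0 n (fun n1 =>
                F13 A1 (A2 - (n1%:R)%:M) B1 (B2 + 1%:M) (C1 + 1%:M))))))
        (fopp (x3_part B1 C1 (fsum 0 n (fun n1 =>
                F13 A1 (A2 - (n1%:R)%:M) (B1 + 1%:M) B2 (C1 + 1%:M)))))).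
Proof.
pose G k := F13 A1 (A2 - (k%:R)%:M) B1 B2 C1.
have step k : feq (G k) (fadd (G k.+1) (F13_incr A1 B1 B2 C1 (A2 - (k%:R)%:M))).
  have lower : A2 - (k.+1%:R)%:M + 1%:M = A2 - (k%:R)%:M.
    by rewrite -natr1 raddfD opprD addrA subrK.
  rewrite /G -lower; apply: F13_contiguous => //.
  by rewrite -raddfN (comm_shift _ (esym A2B1)).
move=> m1 m2 m3.
have := telescope_down (H := fun k => F13_incr A1 B1 B2 C1 (A2 - (k%:R)%:M)) n step m1 m2 m3.
rewrite /G /= => ->.
by rewrite raddf0 subr0 /fadd /fopp F13_incr_fsum /fadd opprD addrA.
Qed.

End Shifts.

Theorem mainTheorem18 (R : realType) (r : nat)
  (A1 A2 B1 B2 C1 : 'M[R[i]]_r) (n : nat) :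
  (forall m : nat, C1 + (m%:R)%:M \in unitmx) ->
  A1 *m B1 = B1 *m A1 -> A2 *m B1 = B1 *m A2 ->
  C1 *m B2 = B2 *m C1 ->
  (1 <= n)%N ->
  (forall m : nat, A2 + (m%:R)%:M \in unitmx) ->
  feq (F13 A1 (A2 + (n%:R)%:M) B1 B2 C1)
      (fadd (fadd (F13 A1 A2 B1 B2 C1)
        (fx2 (fmulr (fmulr (fsum 1 n.+1 (fun n1 =>
                F13 A1 (A2 + (n1%:R)%:M) B1 (B2 + 1%:M) (C1 + 1%:M))) B2)
              (invmx C1))))
        (fx3 (fmull B1 (fmulr (fsum 1 n.+1 (fun n1 =>
                F13 A1 (A2 + (n1%:R)%:M) (B1 + 1%:M) B2 (C1 + 1%:M)))
              (invmx C1)))))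
  /\
  ((forall n1 : nat, (n1 <= n)%N -> A2 - (n1%:R)%:M \in unitmx) ->
   feq (F13 A1 (A2 - (n%:R)%:M) B1 B2 C1)
      (fadd (fadd (F13 A1 A2 B1 B2 C1)
        (fopp (fx2 (fmulr (fmulr (fsum 0 n (fun n1 =>
                F13 A1 (A2 - (n1%:R)%:M) B1 (B2 + 1%:M) (C1 + 1%:M))) B2)
              (invmx C1)))))
        (fopp (fx3 (fmull B1 (fmulr (fsum 0 n (fun n1 =>
                F13 A1 (A2 - (n1%:R)%:M) (B1 + 1%:M) B2 (C1 + 1%:M)))
              (invmx C1))))))).
Proof.
move=> C1_unit A1B1 A2B1 C1B2 _ _; split=> [|_].
- exact: F13_shift_up.
- exact: F13_shift_down.
Qed.
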